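(* Let $G=(V,E)$ be a graph with no $K_4$ minor and let $C\subseteq V$ be central. Then every simple cycle of $G$ contains at most two edges of $\delta_G(C)$.
   Context: $\delta_G(C)$ is the set of edges of $G$ with exactly one endpoint in $C$. A set $C\subseteq V$ (and the cut $\delta_G(C)$) is central if both $C$ and $V\setminus C$ induce connected subgraphs of $G$. *)

From mathcomp Require Import all_boot.
Set Implicit Arguments. Unset Strict Implicit. Unset Printing Implicit Defensive.

Definition simple_graph (T : finType) (e : rel T) : Prop :=
  symmetric e /\ irreflexive e.

Definition induced_connected (T : finType) (e : rel T) (S : {set T}) : bool :=
  [forall x in S, forall y in S,
     connect [rel u v | [&& e u v, u \in S & v \in S]] x y].

Definition central (T : finType) (e : rel T) (C : {set T}) : bool :=
  induced_connected e C && induced_connected e (~: C).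

Definition has_K4_minor (T : finType) (e : rel T) : Prop :=
  exists B : 'I_4 -> {set T},
    (forall i, B i != set0) /\
    (forall i, induced_connected e (B i)) /\
    (forall i j, i != j -> [disjoint B i & B j]) /\
    (forall i j, i != j -> exists x, exists y, [/\ x \in B i, y \in B j & e x y]).

Definition simple_cycle (T : finType) (e : rel T) (s : seq T) : bool :=
  [&& cycle e s, uniq s & 2 < size s].

Definition cycle_cut_edges (T : finType) (s : seq T) (C : {set T}) : nat :=
  count (fun x => (x \in C) != (next s x \in C)) s.

From mathcomp Require Import all_boot.
Set Implicit Arguments. Unset Strict Implicit. Unset Printing Implicit Defensive.

(* Suppose a cycle crosses the cut delta(C) at least three times.  Rotating it, it
   reads x0 :: X ++ L where the arc x0 :: X is a maximal arc inside C and the rest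
   L starts and ends outside C but still meets C (cut_decomposition).  Since C is
   connected, a walk inside C from x0 to L first hits L at some b, splitting L as
   (p0 :: P) ++ b :: (q0 :: Q).  Four branch sets then form a K4 minor
   (K4_of_split): the component of x0 in C minus L, the component of p0 in
   P together with the vertices outside C and off the cycle, the vertex b, and the
   arc q0 :: Q.  The only adjacency not given by an edge of the cycle or of the walk
   is between the second and the fourth set; it comes from a walk outside C (which
   is connected) from p0 to the end of Q, which must leave the second set into Q. *)

Section Components.
Variables (T : finType) (e : rel T).

Definition restrict (S : {set T}) : rel T := [rel u v | [&& e u v, u \in S & v \in S]].

Definition component (S : {set T}) (r : T) : {set T} := [set v | connect (restrict S) r v].

Definition adjacent (A B : {set T}) : Prop := exists x y, [/\ x \in A, y \in B & e x y].

Lemma induced_connectedP (S : {set T}) x y :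
  induced_connected e S -> x \in S -> y \in S -> connect (restrict S) x y.
Proof. by move=> /forallP/(_ x)/implyP hS /hS/forallP/(_ y)/implyP. Qed.

Lemma component_root (S : {set T}) r : r \in component S r.
Proof. by rewrite inE connect0. Qed.

Lemma component_sub (S : {set T}) r : r \in S -> component S r \subset S.
Proof.
move=> rS; apply/subsetP => v; rewrite inE => /connectP[p rp ->] {v}.
by elim: p r rS rp => //= z p IH r _ /andP[/and3P[_ _ zS] zp]; apply: IH.
Qed.

Lemma path_in_component (S : {set T}) x p :
  path e x p -> all [in S] (x :: p) -> {subset x :: p <= component S x}.
Proof.
move=> xp xpS y yp; rewrite inE; apply: path_connect yp.
elim: p x xp xpS => //= z p IH x /andP[exz zp] /and3P[xS zS pS].
by rewrite IH ?zS // andbT; apply/and3P.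
Qed.

Lemma exit_component (A S : {set T}) x y :
  connect (restrict A) x y -> x \in S -> y \notin S ->
  exists u v, [/\ u \in component S x, v \in A :\: S & e u v].
Proof.
move=> /connectP[p xp ->] {y}; elim: p x xp => [|z p IH] x /=; first by move=> _ ->.
case/andP=> /and3P[exz xA zA] zp xS.
case zS: (z \in S); last by exists x, z; rewrite component_root !inE zS zA.
case/(IH z zp zS)=> u [v [uz vAS euv]]; exists u, v; split=> //.
by move: uz; rewrite !inE; apply: connect_trans; exact/connect1/and3P.
Qed.

Lemma disjoint_pointwise (A B : {set T}) :
  (forall v, v \in A -> v \in B -> False) -> [disjoint A & B].
Proof.
move=> AB; rewrite disjoint_subset; apply/subsetP => v vA; rewrite inE.
by apply/negP; apply: AB.
Qed.

Lemma disjoint_components (A B : {set T}) rA rB : rA \in A -> rB \in B ->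
  [disjoint A & B] -> [disjoint component A rA & component B rB].
Proof. by move=> rAA rBB; apply: disjointW; apply: component_sub. Qed.

Hypothesis esym : symmetric e.

Lemma restrict_sym (S : {set T}) : symmetric (restrict S).
Proof. by move=> u v; rewrite /restrict /= esym [(u \in S) && _]andbC. Qed.

Lemma component_connected (S : {set T}) r : induced_connected e (component S r).
Proof.
have stay x y : connect (restrict S) x y -> x \in component S r ->
    connect (restrict (component S r)) x y.
  move=> /connectP[p xp ->] {y}; elim: p x xp => [|z p IH] x /=; first by rewrite connect0.
  case/andP=> xz zp xr.
  have zr : z \in component S r.
    by move: xr; rewrite !inE => /connect_trans; apply; apply: connect1.
  apply: connect_trans (IH z zp zr); apply: connect1.
  by case/and3P: xz => exz _ _; apply/and3P.
apply/forallP => x; apply/implyP => xr; apply/forallP => y; apply/implyP => yr.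
apply: stay (xr); move: xr yr; rewrite !inE => rx ry.
by apply: connect_trans ry; rewrite (sym_connect_sym (restrict_sym S)).
Qed.

Lemma adjacent_sym (A B : {set T}) : adjacent A B -> adjacent B A.
Proof. by case=> x [y [xA yB exy]]; exists y, x; rewrite esym. Qed.

Lemma K4_minor_of_components (S1 S2 S3 S4 : {set T}) (r1 r2 r3 r4 : T) :
  let B1 := component S1 r1 in let B2 := component S2 r2 in
  let B3 := component S3 r3 in let B4 := component S4 r4 in
  r1 \in S1 -> r2 \in S2 -> r3 \in S3 -> r4 \in S4 ->
  [disjoint S1 & S2] -> [disjoint S1 & S3] -> [disjoint S1 & S4] ->
  [disjoint S2 & S3] -> [disjoint S2 & S4] -> [disjoint S3 & S4] ->
  adjacent B1 B2 -> adjacent B1 B3 -> adjacent B1 B4 ->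
  adjacent B2 B3 -> adjacent B2 B4 -> adjacent B3 B4 ->
  has_K4_minor e.
Proof.
move=> B1 B2 B3 B4 r1S r2S r3S r4S D12 D13 D14 D23 D24 D34 A12 A13 A14 A23 A24 A34.
exists (fun i : 'I_4 => match val i with 0 => B1 | 1 => B2 | 2 => B3 | _ => B4 end).
split; [|split; [|split]].
{ by case=> [[|[|[|[|i]]]] Hi] //=; apply/set0Pn; eexists; apply: component_root. }
{ by case=> [[|[|[|[|i]]]] Hi] //=; apply: component_connected. }
{ move=> [[|[|[|[|i]]]] Hi] // [[|[|[|[|j]]]] Hj] //= _; rewrite /B1 /B2 /B3 /B4.
  all: by [apply: disjoint_components | rewrite disjoint_sym; apply: disjoint_components]. }
move=> [[|[|[|[|i]]]] Hi] // [[|[|[|[|j]]]] Hj] //= _.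
all: by [ | apply: adjacent_sym].
Qed.

End Components.

Fixpoint changes (a : bool) (l : seq bool) : nat :=
  if l is b :: l' then (a != b) + changes b l' else 0.

Lemma changes_cat a l1 l2 : changes a (l1 ++ l2) = changes a l1 + changes (last a l1) l2.
Proof. by elim: l1 a => //= b l IH a; rewrite IH addnA. Qed.

Lemma changes_nseq a b n : changes a (nseq n b) = (0 < n) && (a != b).
Proof. by elim: n a => //= n IH a; rewrite IH eqxx andbF addn0. Qed.

Lemma last_nseq (a b : bool) n : last a (nseq n b) = if n is 0 then a else b.
Proof. by elim: n a => //= -[|n] IH a. Qed.

Lemma changes_two_blocks n m k :
  changes false (nseq n false ++ nseq m true ++ nseq k false) <= 2.
Proof.
rewrite !changes_cat !changes_nseq !last_nseq eqxx andbF /=.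
by case: m => [|m]; case: n => [|n] //=; case: k.
Qed.

Section CutEdges.
Variable T : finType.

Lemma map_const (f : T -> bool) a (s : seq T) :
  {in s, forall x, f x = a} -> map f s = nseq (size s) a.
Proof.
move=> fa; rewrite -(size_map f); apply/all_pred1P/allP => _ /mapP[x xs ->].
by rewrite /= fa.
Qed.

Lemma count_changes_next (f : T -> bool) y z p : uniq (z :: p) ->
  count (fun x => f x != f (next_at x y z p)) (z :: p) =
  changes (f z) (rcons (map f p) (f y)).
Proof.
elim: p z => [|z' p IH] z /=; first by rewrite eqxx addn0.
case/andP=> zp up; rewrite eqxx -IH //=.
have neq_z x : x \in z' :: p -> (x == z) = false.
  by move=> xp; apply/eqP => xz; rewrite -xz xp in zp.
rewrite (neq_z z') ?mem_head //; congr (_ + (_ + _)); apply: eq_in_count => x xp /=.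
by rewrite neq_z // inE xp orbT.
Qed.

Lemma cut_edges_changes (C : {set T}) y p : uniq (y :: p) ->
  cycle_cut_edges (y :: p) C = changes (y \in C) (rcons (map [in C] p) (y \in C)).
Proof. by move=> up; rewrite /cycle_cut_edges /= -(count_changes_next [in C]). Qed.

Lemma cut_edges_rot (C : {set T}) n s :
  uniq s -> cycle_cut_edges (rot n s) C = cycle_cut_edges s C.
Proof.
move=> us; rewrite /cycle_cut_edges (eq_count (a2 := fun x => (x \in C) != (next s x \in C))).
  by apply/permP; rewrite perm_rot.
by move=> x /=; rewrite next_rot.
Qed.

Lemma cut_edges_monochromatic (C : {set T}) s :
  all [in C] s || all [predC C] s -> cycle_cut_edges s C = 0.
Proof.
move=> mono; rewrite /cycle_cut_edges -(count_pred0 s); apply: eq_in_count => x xs /=.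
have nxs : next s x \in s by rewrite mem_next.
case/orP: mono => /allP mono; have /= := mono x xs; have /= := mono _ nxs.
  by move=> -> ->.
by move=> /negbTE -> /negbTE ->.
Qed.

Lemma cut_edges_two_blocks (C : {set T}) u N x0 X R :
  uniq (u :: N ++ x0 :: X ++ R) ->
  all [predC C] (u :: N) -> all [in C] (x0 :: X) -> all [predC C] R ->
  cycle_cut_edges (u :: N ++ x0 :: X ++ R) C <= 2.
Proof.
move=> un /andP[/negbTE uC outN] inX outR; rewrite cut_edges_changes // uC.
have out_false (Y : seq T) : all [predC C] Y -> map [in C] Y = nseq (size Y) false.
  by move=> outY; apply: map_const => y /(allP outY) /negbTE.
rewrite -cat_cons !map_cat out_false // (@map_const _ true (x0 :: X) (allP inX)) out_false //.
by rewrite !rcons_cat -cats1 -(nseqD _ 1) changes_two_blocks.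
Qed.

Lemma cut_decomposition (C : {set T}) u p :
  uniq (u :: p) -> u \notin C -> 2 < cycle_cut_edges (u :: p) C ->
  exists n x0 X L, [/\ rot n (u :: p) = x0 :: X ++ L, all [in C] (x0 :: X),
    head x0 L \notin C, last x0 L \notin C & has [in C] L].
Proof.
move=> un uC many; have [inp | outp] := boolP (has [in C] p); last first.
  by move: many; rewrite cut_edges_monochromatic //= uC all_predC outp orbT.
case: (split_find inp) un many => x0 N r x0C outN; rewrite cat_rcons.
have outuN : all [predC C] (u :: N) by rewrite /= uC all_predC.
have [outr | inr] := boolP (has [predC C] r); last first.
  rewrite -(cats0 r) => un; rewrite ltnNge cut_edges_two_blocks //=.
  by apply/andP; split => //; move: inr; rewrite has_predC negbK.
case: (split_find outr) => w X R' wC inX; rewrite cat_rcons.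
have inx0X : all [in C] (x0 :: X).
  by apply/andP; split => //; move: inX; rewrite has_predC negbK.
have [inR' | outR'] := boolP (has [in C] R'); last first.
  by move=> un; rewrite ltnNge cut_edges_two_blocks //= all_predC outR' andbT.
move=> _ _; exists (size (u :: N)), x0, X, (w :: R' ++ u :: N); split=> //.
- by rewrite rot_size_cat /= -catA.
- by rewrite /= last_cat /=; apply: (allP outuN); apply: mem_last.
- by rewrite /= has_cat inR' orbT.
Qed.

End CutEdges.

Section CycleMinor.
Variables (T : finType) (e : rel T) (C : {set T}).
Hypotheses (esym : symmetric e) (connC : induced_connected e C).
Hypothesis connNC : induced_connected e (~: C).

Section SplitCycle.
Variables (x0 b p0 q0 : T) (X P Q : seq T).
Let L := (p0 :: P) ++ b :: q0 :: Q.
Let s := x0 :: X ++ L.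
Hypotheses (s_cycle : cycle e s) (s_uniq : uniq s).
Hypotheses (X_in : all [in C] (x0 :: X)) (p0_out : p0 \notin C).
Hypotheses (b_in : b \in C) (qlast_out : last q0 Q \notin C).

Let S1 := C :\: [set v in L].
Let S2 := [set v in p0 :: P] :|: (~: C :\: [set v in s]).
Let S3 := [set b].
Let S4 := [set v in q0 :: Q].

Let setE := (in_setD, in_setU, in_setC, in_set1, in_set).

Lemma X_notin_L v : v \in x0 :: X -> v \notin L.
Proof.
move: s_uniq; rewrite /s -cat_cons cat_uniq => /and3P[_ /hasPn notX _] vX.
by apply/negP => /notX; rewrite vX.
Qed.

Lemma P_notin_bQ v : v \in p0 :: P -> v \notin b :: q0 :: Q.
Proof.
move: s_uniq; rewrite /s -cat_cons cat_uniq /L cat_uniq.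
move=> /and3P[_ _ /and3P[_ /hasPn notP _]] vP.
by apply/negP => /notP; rewrite vP.
Qed.

Lemma b_notin_Q : b \notin q0 :: Q.
Proof.
move: s_uniq; rewrite /s -cat_cons cat_uniq /L cat_uniq.
by case/and3P=> _ _ /and3P[_ _ /andP[]].
Qed.

Lemma Q_in_s v : v \in q0 :: Q -> v \in s.
Proof. by move=> vQ; rewrite /s /L -cat_cons !mem_cat [v \in b :: _]in_cons vQ !orbT. Qed.

Lemma disjoint_S1_S2 : [disjoint S1 & S2].
Proof.
apply: disjoint_pointwise => v; rewrite !setE => /andP[vL vC] /orP[vP | /andP[_ vC']].
  by move: vL; rewrite /L mem_cat vP.
by rewrite vC in vC'.
Qed.

Lemma disjoint_S1_S3 : [disjoint S1 & S3].
Proof.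
apply: disjoint_pointwise => v; rewrite !setE => /andP[vL _] /eqP vb.
by move: vL; rewrite vb /L mem_cat mem_head orbT.
Qed.

Lemma disjoint_S1_S4 : [disjoint S1 & S4].
Proof.
apply: disjoint_pointwise => v; rewrite !setE => /andP[vL _] vQ.
by move: vL; rewrite /L mem_cat [v \in b :: _]in_cons vQ !orbT.
Qed.

Lemma disjoint_S2_S3 : [disjoint S2 & S3].
Proof.
apply: disjoint_pointwise => v; rewrite !setE => /orP[vP | /andP[_ vC]] /eqP vb.
  by have := P_notin_bQ vP; rewrite vb mem_head.
by move: vC; rewrite vb b_in.
Qed.

Lemma disjoint_S2_S4 : [disjoint S2 & S4].
Proof.
apply: disjoint_pointwise => v; rewrite !setE => /orP[vP | /andP[vs _]] vQ.
  by have := P_notin_bQ vP; rewrite [v \in b :: _]in_cons vQ orbT.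
by rewrite (Q_in_s vQ) in vs.
Qed.

Lemma disjoint_S3_S4 : [disjoint S3 & S4].
Proof.
apply: disjoint_pointwise => v; rewrite !setE => /eqP -> bQ.
by move: b_notin_Q; rewrite bQ.
Qed.

Lemma escape_S2_in_Q v : v \in ~: C -> v \notin S2 -> v \in q0 :: Q.
Proof.
rewrite !setE negb_or => vC /andP[vP /nandP[|]]; last by rewrite vC.
rewrite negbK /s /L -cat_cons !mem_cat [v \in b :: _]in_cons.
case/or4P=> [vX | vP' | /eqP vb | //].
- by move: vC; have /= -> := allP X_in v vX.
- by rewrite vP' in vP.
- by move: vC; rewrite vb b_in.
Qed.

(* The four branch sets are pairwise adjacent: five adjacencies come from edges of
   the cycle or from the given edge u b, and the path in the outside of C from p0
   to the end of Q must leave S2 through an edge into Q. *)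
Lemma K4_of_split u : u \in component e S1 x0 -> e u b -> has_K4_minor e.
Proof.
move=> uB1 eub.
move: s_cycle; rewrite /s /L /= rcons_cat cat_path /= rcons_cat cat_path /= rcons_path.
move=> /and5P[pathX eXp0 pathP ePb /andP[ebq0 /andP[pathQ eQx0]]].
have x0S1 : x0 \in S1 by rewrite !setE X_notin_L ?mem_head //= (allP X_in x0 (mem_head _ _)).
have p0S2 : p0 \in S2 by rewrite !setE mem_head.
have bS3 : b \in S3 by rewrite !setE.
have q0S4 : q0 \in S4 by rewrite !setE mem_head.
have B1X : {subset x0 :: X <= component e S1 x0}.
  apply: path_in_component pathX _; apply/allP => v vX.
  by rewrite /= !setE X_notin_L //= (allP X_in v vX).
have B2P : {subset p0 :: P <= component e S2 p0}.
  by apply: path_in_component pathP _; apply/allP => v vP; rewrite /= !setE vP.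
have B4Q : {subset q0 :: Q <= component e S4 q0}.
  by apply: path_in_component pathQ _; apply/allP => v vQ; rewrite /= !setE vQ.
have qlast_Q : last q0 Q \in q0 :: Q := mem_last q0 Q.
have qlastS2 : last q0 Q \notin S2.
  rewrite !setE negb_or Q_in_s //= andbT; apply/negP => /P_notin_bQ.
  by rewrite [_ \in b :: _]in_cons qlast_Q orbT.
have p0_NC : p0 \in ~: C by rewrite in_setC.
have qlast_NC : last q0 Q \in ~: C by rewrite in_setC.
have [u2 [v2 [u2B2 v2out eu2v2]]] :=
  exit_component (induced_connectedP connNC p0_NC qlast_NC) p0S2 qlastS2.
apply: (K4_minor_of_components esym x0S1 p0S2 bS3 q0S4 disjoint_S1_S2 disjoint_S1_S3
  disjoint_S1_S4 disjoint_S2_S3 disjoint_S2_S4 disjoint_S3_S4).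
- by exists (last x0 X), p0; rewrite B1X ?mem_last ?component_root.
- by exists u, b; rewrite component_root.
- by exists x0, (last q0 Q); rewrite component_root B4Q // esym.
- by exists (last p0 P), b; rewrite B2P ?mem_last ?component_root.
- exists u2, v2; split=> //; apply: B4Q; move: v2out; rewrite in_setD => /andP[].
  by move=> v2S2 v2NC; apply: escape_S2_in_Q.
- by exists b, q0; rewrite component_root B4Q ?mem_head.
Qed.

End SplitCycle.

(* A cycle x0 :: X ++ L whose arc x0 :: X lies in C and whose remaining segment L
   starts and ends outside C but meets C yields a K4 minor: walking inside C from
   x0 to a vertex of L, we first reach L at a vertex b, which splits L as
   (p0 :: P) ++ b :: (q0 :: Q). *)
Lemma K4_of_cut_decomposition x0 X L :
  cycle e (x0 :: X ++ L) -> uniq (x0 :: X ++ L) -> all [in C] (x0 :: X) ->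
  head x0 L \notin C -> last x0 L \notin C -> has [in C] L -> has_K4_minor e.
Proof.
move=> cycleL uniqL X_in headL lastL /hasP[c cL cC].
have x0C : x0 \in C := allP X_in x0 (mem_head _ _).
have x0S1 : x0 \in C :\: [set v in L].
  rewrite in_setD in_set x0C andbT; apply/negP => x0L.
  by move: uniqL; rewrite /= mem_cat x0L orbT.
have cS1 : c \notin C :\: [set v in L] by rewrite in_setD in_set cL.
have [u [b [uB1 /setDP[bC bS1] eub]]] :=
  exit_component (induced_connectedP connC x0C cC) x0S1 cS1.
have [P [Q defL]] : exists P Q, L = P ++ b :: Q.
  by move: bS1; rewrite in_setD in_set bC andbT negbK => /splitPr[P Q]; exists P, Q.
subst L; clear x0S1 cL cS1 bS1.
case: P headL lastL cycleL uniqL uB1 => [|p0 P] /=; first by rewrite bC.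
case: Q => [|q0 Q]; first by rewrite last_cat /= bC.
rewrite last_cat /= => p0_out qlast_out cycleL uniqL uB1.
exact: (K4_of_split cycleL uniqL X_in p0_out bC qlast_out uB1 eub).
Qed.

End CycleMinor.

Unset Implicit Arguments. Set Strict Implicit. Set Printing Implicit Defensive.

(* A cycle crossing delta(C) three times or more has a vertex outside C (else it
   crosses nothing); rotated to start there, cut_decomposition puts it in the
   shape required by K4_of_cut_decomposition. *)
Theorem lemma2p2 (T : finType) (e : rel T) (C : {set T}) (s : seq T) :
  simple_graph e -> ~ has_K4_minor e -> central e C -> simple_cycle e s ->
  cycle_cut_edges s C <= 2.
Proof.
move=> [esym _] noK4 /andP[connC connNC] /and3P[cycle_s uniq_s _].
rewrite leqNgt; apply/negP => many; apply: noK4.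
have [/hasP[u us uC] | /hasPn inC] := boolP (has [predC C] s); last first.
  move: many; rewrite cut_edges_monochromatic //.
  by apply/orP; left; apply/allP => x /inC /negPn.
case: (rot_to us) => i p rot_s.
have uniq_up : uniq (u :: p) by rewrite -rot_s rot_uniq.
have many_up : 2 < cycle_cut_edges (u :: p) C by rewrite -rot_s cut_edges_rot.
have [n [x0 [X [L [rot_up X_in headL lastL meetL]]]]] := cut_decomposition uniq_up uC many_up.
apply: (K4_of_cut_decomposition esym connC connNC _ _ X_in headL lastL meetL).
- by rewrite -rot_up rot_cycle -rot_s rot_cycle.
- by rewrite -rot_up rot_uniq.
Qed.
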